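(* Let $\mathcal{K}$ be a Fraïssé class in a finite relational language $\mathcal{L}$, let $\mathbf{K}=\mathrm{Flim}(\mathcal{K})$ have finite big Ramsey degrees, and let $\mathbf{K}^*$ and $\mathbf{K}'$ be recurrent big Ramsey structures for $\mathbf{K}$ in finite relational languages $\mathcal{L}^*\supseteq\mathcal{L}$ and $\mathcal{L}'\supseteq\mathcal{L}$ respectively. Then each of $\mathbf{K}^*$, $\mathbf{K}'$ is bi-interpretable with a substructure of the other.
   Context: For structures $\mathbf{A},\mathbf{B}$, $\mathrm{Emb}(\mathbf{A},\mathbf{B})$ is the set of embeddings. For $\mathbf{A}\in\mathcal{K}$, the big Ramsey degree $\mathrm{BRD}(\mathbf{A},\mathbf{K})$ is the least $t$ (if it exists) such that for every $r>t$ and every coloring $\chi:\mathrm{Emb}(\mathbf{A},\mathbf{K})\to r$ there is $g\in\mathrm{Emb}(\mathbf{K},\mathbf{K})$ with $|\chi[g\circ\mathrm{Emb}(\mathbf{A},\mathbf{K})]|\le t$. For $\mathcal{L}^*\supseteq\mathcal{L}$ and an $\mathcal{L}^*$-expansion $\mathbf{M}^*$ of $\mathbf{M}$ (same underlying set, $\mathcal{L}$-reduct equal to $\mathbf{M}$), $\mathbf{M}^*(\mathbf{B})$ denotes the set of $\mathcal{L}^*$-expansions of the finite structure $\mathbf{B}$ embeddable in $\mathbf{M}^*$, and for $f\in\mathrm{Emb}(\mathbf{B},\mathbf{M})$, $\mathbf{M}^*\cdot f$ is the unique $\mathbf{B}^*\in\mathbf{M}^*(\mathbf{B})$ with $f\in\mathrm{Emb}(\mathbf{B}^*,\mathbf{M}^*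 )$. A big Ramsey structure for $\mathbf{K}$ is an expansion $\mathbf{K}^*$ such that for every $\mathbf{A}\in\mathcal{K}$, $|\mathbf{K}^*(\mathbf{A})|=\mathrm{BRD}(\mathbf{A},\mathbf{K})$ and for every $g\in\mathrm{Emb}(\mathbf{K},\mathbf{K})$ the coloring $f\mapsto\mathbf{K}^*\cdot f$ takes all $|\mathbf{K}^*(\mathbf{A})|$ values on $g\circ\mathrm{Emb}(\mathbf{A},\mathbf{K})$. It is recurrent if $\mathrm{Emb}(\mathbf{K}^*,\mathbf{K}^*\cdot\eta)\ne\emptyset$ for every $\eta\in\mathrm{Emb}(\mathbf{K},\mathbf{K})$, where $\mathbf{K}^*\cdot\eta$ is the expansion of $\mathbf{K}$ pulled back along $\eta$. *)

From mathcomp Require Import all_boot.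
Set Implicit Arguments. Unset Strict Implicit. Unset Printing Implicit Defensive.

Record lang := Lang { sym :> finType; ar : sym -> nat }.

Definition structure (L : lang) (T : Type) := forall s : L, (ar s).-tuple T -> bool.

Definition is_emb (L : lang) (T U : Type) (A : structure L T) (B : structure L U)
  (f : T -> U) : Prop :=
  injective f /\ forall (s : L) (x : (ar s).-tuple T), B s (map_tuple f x) = A s x.

Definition Emb (L : lang) (T U : Type) (A : structure L T) (B : structure L U) :=
  {f : T -> U | is_emb A B f}.

(* Expansions: a language L^* ⊇ L is L ⊔ E for a finite language E of new
   symbols; an L^*-expansion of M is given by an E-structure X on the same
   carrier.  Pull-back of the new relations along a map f (this is M^*.f). *)
Definition pull (E : lang) (T U : Type) (X : structure E U) (f : T -> U) : structure E T :=
  fun s x => X s (map_tuple f x).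

Definition exp_set (L E : lang) (T U : Type) (B : structure L T)
  (M : structure L U) (X : structure E U) (Y : structure E T) : Prop :=
  exists f : T -> U, is_emb B M f /\ is_emb Y X f.

Definition card_is (X : Type) (P : X -> Prop) (n : nat) : Prop :=
  exists e : 'I_n -> X, injective e /\ forall x, P x <-> exists i, e i = x.

Definition fclass (L : lang) := forall T : finType, structure L T -> Prop.

Definition hereditary (L : lang) (K : fclass L) : Prop :=
  forall (T1 T2 : finType) (A : structure L T1) (B : structure L T2) (f : T1 -> T2),
    K T2 B -> is_emb A B f -> K T1 A.

Definition jep (L : lang) (K : fclass L) : Prop :=
  forall (T1 T2 : finType) (A : structure L T1) (B : structure L T2),
    K T1 A -> K T2 B ->
    exists (T3 : finType) (C : structure L T3) (f : T1 -> T3) (g : T2 -> T3),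
      [/\ K T3 C, is_emb A C f & is_emb B C g].

Definition ap (L : lang) (K : fclass L) : Prop :=
  forall (T0 T1 T2 : finType) (A : structure L T0) (B : structure L T1)
         (C : structure L T2) (f : T0 -> T1) (g : T0 -> T2),
    K T0 A -> K T1 B -> K T2 C -> is_emb A B f -> is_emb A C g ->
    exists (T3 : finType) (D : structure L T3) (h : T1 -> T3) (k : T2 -> T3),
      [/\ K T3 D, is_emb B D h, is_emb C D k & forall a, h (f a) = k (g a)].

(* Fraisse class (in a finite relational language, countably many
   isomorphism types is automatic; closure under isomorphism follows from
   heredity). *)
Definition fraisse_class (L : lang) (K : fclass L) : Prop :=
  [/\ exists (T : finType) (A : structure L T), K T A, hereditary K, jep K & ap K].

Definition is_flim (L : lang) (Kc : fclass L) (U : countType) (K : structure L U) : Prop :=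
  (forall (T : finType) (A : structure L T), Kc T A <-> exists f, is_emb A K f) /\
  (forall (T : finType) (A : structure L T) (f g : T -> U),
     is_emb A K f -> is_emb A K g ->
     exists s : U -> U, [/\ is_emb K K s, bijective s & forall a, s (f a) = g a]).

Definition brd_bound (L : lang) (T : finType) (U : Type) (A : structure L T)
  (K : structure L U) (t : nat) : Prop :=
  forall r : nat, t < r -> forall chi : Emb A K -> 'I_r,
    exists g : U -> U, is_emb K K g /\
      exists S : {set 'I_r}, #|S| <= t /\
        forall h : Emb A K, (exists f : T -> U, is_emb A K f /\ proj1_sig h =1 g \o f) ->
          chi h \in S.

Definition is_BRD (L : lang) (T : finType) (U : Type) (A : structure L T)
  (K : structure L U) (t : nat) : Prop :=
  brd_bound A K t /\ forall t', brd_bound A K t' -> t <= t'.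

Definition finite_BRDs (L : lang) (Kc : fclass L) (U : Type) (K : structure L U) : Prop :=
  forall (T : finType) (A : structure L T), Kc T A -> exists t, brd_bound A K t.

Definition big_ramsey_structure (L E : lang) (Kc : fclass L) (U : Type)
  (K : structure L U) (X : structure E U) : Prop :=
  forall (T : finType) (A : structure L T), Kc T A ->
    (exists t, is_BRD A K t /\ card_is (exp_set A K X) t) /\
    (forall g : U -> U, is_emb K K g ->
       forall Y : structure E T, exp_set A K X Y ->
         exists f : T -> U, is_emb A K f /\ is_emb Y X (g \o f)).

Definition recurrent (L E : lang) (U : Type) (K : structure L U) (X : structure E U) : Prop :=
  forall eta : U -> U, is_emb K K eta ->
    exists h : U -> U, is_emb K K h /\ is_emb X (pull X eta) h.

Definition bi_interpretable (L E E' : lang) (U : Type) (K : structure L U)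
  (X : structure E U) (X' : structure E' U) : Prop :=
  forall (T : finType) (A : structure L T) (f g : T -> U),
    is_emb A K f -> is_emb A K g -> (pull X f = pull X g <-> pull X' f = pull X' g).

From mathcomp Require Import all_boot.
From Stdlib Require Import ClassicalEpsilon FunctionalExtensionality Classical.

Set Implicit Arguments. Unset Strict Implicit. Unset Printing Implicit Defensive.

(* Index the K^*-expansions and the K'-expansions of a finite A in Age(K) by
   'I_t, t = BRD(A,K), and colour each embedding f of A by the pair of
   indices of K^*.f and K'.f.  Big Ramsey degree t yields a copy of K on
   which at most t pairs occur, and recurrence lets us take that copy inside
   K^* itself.  In every copy both indices take all t values, so the t
   occurring pairs form the graph of a bijection: on that copy K^*.f
   determines K'.f and conversely.  Doing this successively for the finitely
   many A whose size is bounded by the arities of L^* and L' makes the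
   two expansions bi-interpretable on a single copy. *)

Lemma map_tuple_comp (T U V : Type) n (f : U -> V) (g : T -> U) (x : n.-tuple T) :
  map_tuple f (map_tuple g x) = map_tuple (f \o g) x.
Proof. by apply: val_inj; rewrite /= map_comp. Qed.

Lemma map_tuple_id (T : Type) n (x : n.-tuple T) : map_tuple id x = x.
Proof. by apply: val_inj; rewrite /= map_id. Qed.

Lemma pull_comp (E : lang) (T U V : Type) (X : structure E V) (f : U -> V) (g : T -> U) :
  pull (pull X f) g = pull X (f \o g).
Proof.
apply: functional_extensionality_dep => s; apply: functional_extensionality => x.
by rewrite /pull map_tuple_comp.
Qed.

Lemma pull_emb (E : lang) (T U : Type) (Y : structure E T) (X : structure E U) f :
  is_emb Y X f -> pull X f = Y.
Proof.
move=> [_ fY]; apply: functional_extensionality_dep => s.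
by apply: functional_extensionality => x; rewrite /pull fY.
Qed.

Lemma emb_id (L : lang) (T : Type) (A : structure L T) : is_emb A A id.
Proof. by split=> // s x; rewrite map_tuple_id. Qed.

Lemma emb_comp (L : lang) (T U V : Type) (A : structure L T) (B : structure L U)
  (C : structure L V) f g : is_emb A B f -> is_emb B C g -> is_emb A C (g \o f).
Proof.
move=> [f_inj fAB] [g_inj gBC]; split; first exact: inj_comp.
by move=> s x; rewrite -map_tuple_comp gBC fAB.
Qed.

Lemma emb_pull (E : lang) (T U : Type) (X : structure E U) (f : T -> U) :
  injective f -> is_emb (pull X f) X f.
Proof. by []. Qed.

Lemma emb_into_pull (E : lang) (T U V : Type) (Y : structure E T) (X : structure E V)
  (phi : U -> V) (f : T -> U) :
  injective f -> is_emb Y X (phi \o f) -> is_emb Y (pull X phi) f.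
Proof. by move=> f_inj [_ fY]; split=> // s x; rewrite /pull map_tuple_comp fY. Qed.

Lemma exp_set_pull (L E : lang) (T U : Type) (A : structure L T) (M : structure L U)
  (X : structure E U) (f : T -> U) : is_emb A M f -> exp_set A M X (pull X f).
Proof. by move=> fA; exists f; split=> //; apply: emb_pull; case: fA. Qed.

Definition bi_interpretable_on (L E E' : lang) (T U : Type) (A : structure L T)
  (K : structure L U) (X : structure E U) (X' : structure E' U) : Prop :=
  forall f g, is_emb A K f -> is_emb A K g -> (pull X f = pull X g <-> pull X' f = pull X' g).

Lemma card_is_ext (Y : Type) (P Q : Y -> Prop) n :
  (forall y, P y <-> Q y) -> card_is P n -> card_is Q n.
Proof. by move=> PQ [e [e_inj eP]]; exists e; split=> // y; rewrite -PQ. Qed.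

Lemma card_is_index (Y : Type) (P : Y -> Prop) n :
  card_is P n -> (exists y, P y) ->
  exists idx : Y -> 'I_n,
    (forall y y', P y -> P y' -> idx y = idx y' -> y = y') /\
    (forall i, exists2 y, P y & idx y = i).
Proof.
move=> [e [e_inj eP]] [y0 /eP [i0 _]].
pose idx y := epsilon (inhabits i0) (fun i => e i = y).
have idxK y : P y -> e (idx y) = y.
  by move=> /eP Py; apply: (epsilon_spec (inhabits i0) (fun i => e i = y)).
exists idx; split=> [y y' Py Py' eq_idx | i].
  by rewrite -(idxK _ Py) -(idxK _ Py') eq_idx.
have Pei : P (e i) by apply/eP; exists i.
by exists (e i) => //; apply: e_inj; rewrite idxK.
Qed.

Lemma inj_on_of_surj_card (aT rT : finType) (f : aT -> rT) (D : {set aT}) :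
  f @: D = setT -> #|D| <= #|rT| -> {in D &, injective f}.
Proof.
by move=> fD leD; apply/imset_injP; rewrite eqn_leq leq_imset_card fD cardsT.
Qed.

Lemma small_bisurjective_is_graph (I J : finType) (R : {set I * J}) :
  #|R| <= #|I| -> #|R| <= #|J| ->
  [set p.1 | p in R] = setT -> [set p.2 | p in R] = setT ->
  {in R &, forall p q, p.1 = q.1 <-> p.2 = q.2}.
Proof.
move=> leI leJ onto1 onto2 p q pR qR.
have inj1 := inj_on_of_surj_card onto1 leI; have inj2 := inj_on_of_surj_card onto2 leJ.
by split=> eq_pq; rewrite ?(inj1 _ _ pR qR eq_pq) ?(inj2 _ _ pR qR eq_pq).
Qed.

Section Expansions.

Variables (L : lang) (U : Type) (K : structure L U).

Lemma bi_interpretable_on_pull (E E' : lang) (T : finType) (A : structure L T)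
  (X : structure E U) (Y : structure E' U) (psi : U -> U) :
  bi_interpretable_on A K X Y -> is_emb K K psi -> is_emb X X psi ->
  bi_interpretable_on A K X (pull Y psi).
Proof.
move=> XY psiK psiX f g fA gA; rewrite -(pull_emb psiX) !pull_comp.
exact: XY (emb_comp fA psiK) (emb_comp gA psiK).
Qed.

Lemma is_BRD_unique (T : finType) (A : structure L T) t t' :
  is_BRD A K t -> is_BRD A K t' -> t = t'.
Proof. by move=> [bt tmin] [bt' t'min]; apply/eqP; rewrite eqn_leq tmin ?t'min. Qed.

Lemma recurrent_brd_bound (E : lang) (T : finType) (A : structure L T)
  (X : structure E U) (C : finType) (c : (T -> U) -> C) t :
  brd_bound A K t -> recurrent K X ->
  exists psi, [/\ is_emb K K psi, is_emb X X psi &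
    exists2 S : {set C}, #|S| <= t & forall f, is_emb A K f -> c (psi \o f) \in S].
Proof.
move=> bt rec; pose r := #|C| + t.+1.
have leCr : #|C| <= r by rewrite leq_addr.
pose enc (x : C) : 'I_r := widen_ord leCr (enum_rank x).
have enc_inj : injective enc by move=> x y /(congr1 val) /= /val_inj /enum_rank_inj.
have [g [gK [S [cardS gS]]]] := bt r (ltn_addl _ (ltnSn t)) (fun h => enc (c (sval h))).
have [h [hK hX]] := rec g gK.
have psiK := emb_comp hK gK.
have g_inj : injective g by case: gK.
exists (g \o h); split=> //; first exact: emb_comp hX (emb_pull X g_inj).
exists [set x | enc x \in S].
  rewrite -(card_imset _ enc_inj); apply: leq_trans cardS.
  by apply/subset_leq_card/subsetP => y /imsetP [x]; rewrite inE => Sx ->.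
move=> f fA; rewrite inE; apply: (gS (exist _ _ (emb_comp fA psiK))).
by exists (h \o f); split; first exact: emb_comp fA hK.
Qed.

Section BigRamseyStructure.

Variables (Kc : fclass L) (E : lang) (X : structure E U).
Hypothesis BR : big_ramsey_structure Kc K X.

Lemma brs_pull (phi : U -> U) : is_emb K K phi -> big_ramsey_structure Kc K (pull X phi).
Proof.
move=> phiK T A KA; have [[t [tBRD cardt]] onto] := BR KA.
have phi_inj : injective phi by case: phiK.
have expE Y : exp_set A K X Y <-> exp_set A K (pull X phi) Y.
  split=> [/(onto _ phiK) [f [fA fY]] | [f [fA fY]]].
    by exists f; split=> //; apply: emb_into_pull fY; case: fA.
  by exists (phi \o f); split; [exact: emb_comp fA phiK | exact: emb_comp fY (emb_pull _ _)].
split; first by exists t; split=> //; apply: card_is_ext cardt.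
move=> g gK Y /expE /(onto _ (emb_comp gK phiK)) [f [fA fY]].
by exists f; split=> //; apply: (emb_into_pull (f := g \o f) _ fY); case: (emb_comp fA gK).
Qed.

Lemma brs_index (T : finType) (A : structure L T) :
  Kc A -> (exists f, is_emb A K f) ->
  exists t, is_BRD A K t /\ exists idx : structure E T -> 'I_t,
    (forall f g, is_emb A K f -> is_emb A K g ->
       idx (pull X f) = idx (pull X g) <-> pull X f = pull X g) /\
    (forall psi, is_emb K K psi ->
       forall i, exists2 f, is_emb A K f & idx (pull X (psi \o f)) = i).
Proof.
move=> KA [f0 f0A]; have [[t [tBRD cardt]] onto] := BR KA.
have [idx [idx_inj idx_onto]] := card_is_index cardt (ex_intro _ _ (exp_set_pull X f0A)).
exists t; split=> //; exists idx; split=> [f g fA gA | psi psiK i].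
  by split=> [|-> //]; apply: idx_inj; apply: exp_set_pull.
have [Y /(onto _ psiK) [f [fA fY]] <-] := idx_onto i.
by exists f; rewrite ?(pull_emb fY).
Qed.

End BigRamseyStructure.

End Expansions.

(* {m : 'I_N.+1 & code L m} is a finite type covering all L-structures of
   size at most N, up to isomorphism. *)
Definition code (L : lang) (m : nat) :=
  {dffun forall s : L, {ffun (ar s).-tuple 'I_m -> bool}}.

Definition decode (L : lang) (m : nat) (c : code L m) : structure L 'I_m := fun s x => c s x.

Definition encode (L : lang) (m : nat) (C : structure L 'I_m) : code L m :=
  [ffun s => [ffun x => C s x]].

Lemma encodeK (L : lang) (m : nat) (C : structure L 'I_m) : decode (encode C) = C.
Proof.
apply: functional_extensionality_dep => s; apply: functional_extensionality => x.
by rewrite /decode !ffunE.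
Qed.

Lemma tuple_factor_inj (T : finType) n (x : n.-tuple T) :
  exists m (sigma : 'I_m -> T) (y : n.-tuple 'I_m),
    [/\ m <= n, injective sigma & map_tuple sigma y = x].
Proof.
pose S := [set z in x].
have x_S i : tnth x i \in S by rewrite inE mem_tnth.
exists #|S|, enum_val, [tuple enum_rank_in (x_S i) (tnth x i) | i < n]; split.
- by rewrite cardsE (leq_trans (card_size _)) ?size_tuple.
- exact: enum_val_inj.
- by apply: eq_from_tnth => i; rewrite tnth_map tnth_mktuple enum_rankK_in.
Qed.

Lemma pull_eq_small (E : lang) (T : finType) (V : Type) (Z : structure E V)
  (f g : T -> V) N :
  (forall s : E, ar s <= N) ->
  (forall m (sigma : 'I_m -> T), m <= N -> injective sigma ->
     pull Z (f \o sigma) = pull Z (g \o sigma)) ->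
  pull Z f = pull Z g.
Proof.
move=> arN fg; apply: functional_extensionality_dep => s.
apply: functional_extensionality => x.
have [m [sigma [y [mn sigma_inj <-]]]] := tuple_factor_inj x.
have := congr1 (fun W => W s y) (fg m sigma (leq_trans mn (arN s)) sigma_inj).
by rewrite /pull !map_tuple_comp.
Qed.

Lemma bi_interpretable_of_small (L E E' : lang) (U : Type) (K : structure L U)
  (X : structure E U) (Y : structure E' U) N :
  (forall s : E, ar s <= N) -> (forall s : E', ar s <= N) ->
  (forall c : {m : 'I_N.+1 & code L m}, bi_interpretable_on (decode (tagged c)) K X Y) ->
  bi_interpretable K X Y.
Proof.
move=> arE arE' small T A f g fA gA.
have small_on m (sigma : 'I_m -> T) : m <= N -> injective sigma ->
    pull X (f \o sigma) = pull X (g \o sigma) <-> pull Y (f \o sigma) = pull Y (g \o sigma).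
  move=> mN sigma_inj; have sigmaA := emb_pull A sigma_inj.
  have := small (existT _ (Ordinal (mN : m < N.+1)) (encode (pull A sigma))).
  by rewrite /= encodeK; apply; apply: emb_comp sigmaA _.
split=> eq_fg; [apply: (pull_eq_small arE') | apply: (pull_eq_small arE)];
  move=> m sigma mN sigma_inj; apply/(small_on m sigma mN sigma_inj);
  by move: (congr1 (fun W => pull W sigma) eq_fg); rewrite !pull_comp.
Qed.

Section FraisseLimit.

Variables (L : lang) (Kc : fclass L) (U : countType) (K : structure L U).
Hypothesis flim : is_flim Kc K.

Lemma brs_bi_interpretable_on (E E' : lang) (X : structure E U) (X' : structure E' U)
  (T : finType) (A : structure L T) :
  big_ramsey_structure Kc K X -> recurrent K X -> big_ramsey_structure Kc K X' ->
  exists psi, [/\ is_emb K K psi, is_emb X X psi & bi_interpretable_on A K X (pull X' psi)].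
Proof.
move=> BR rec BR'.
have [A_emb | noA] := classic (exists f, is_emb A K f); last first.
  by exists id; split; [exact: emb_id | exact: emb_id | move=> f g fA; case: noA; exists f].
have KA := (flim.1 T A).2 A_emb.
have [t [tBRD [idx [idxE idx_onto]]]] := brs_index BR KA A_emb.
have [t' [t'BRD [idx' [idx'E idx'_onto]]]] := brs_index BR' KA A_emb.
have eq_t : t' = t := is_BRD_unique t'BRD tBRD; subst t'.
pose colour f := (idx (pull X f), idx' (pull X' f)).
have [psi [psiK psiX [S cardS psiS]]] := recurrent_brd_bound colour tBRD.1 rec.
have graphS : {in S &, forall p q, p.1 = q.1 <-> p.2 = q.2}.
  apply: small_bisurjective_is_graph; rewrite ?card_ord //.
  - apply/eqP; rewrite eqEsubset subsetT; apply/subsetP => i _.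
    have [f fA <-] := idx_onto psi psiK i.
    by apply/imsetP; exists (colour (psi \o f)); first exact: psiS.
  - apply/eqP; rewrite eqEsubset subsetT; apply/subsetP => i _.
    have [f fA <-] := idx'_onto psi psiK i.
    by apply/imsetP; exists (colour (psi \o f)); first exact: psiS.
exists psi; split=> // f g fA gA.
have [psi_fA psi_gA] := (emb_comp fA psiK, emb_comp gA psiK).
rewrite -(pull_emb psiX) !pull_comp -idxE // -idx'E //.
exact: graphS (psiS f fA) (psiS g gA).
Qed.

Lemma brs_bi_interpretable_on_family (E E' : lang) (X : structure E U) (X' : structure E' U)
  (I : finType) (T : I -> finType) (A : forall i, structure L (T i)) :
  big_ramsey_structure Kc K X -> recurrent K X -> big_ramsey_structure Kc K X' ->
  exists phi, is_emb K K phi /\ forall i, bi_interpretable_on (A i) K X (pull X' phi).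
Proof.
move=> BR rec BR'.
suff /(_ (enum I)) [phi [phiK phiA]] : forall s : seq I, exists phi,
    is_emb K K phi /\ forall i, i \in s -> bi_interpretable_on (A i) K X (pull X' phi).
  by exists phi; split=> // i; apply: phiA; rewrite mem_enum.
elim=> [|i s [phi [phiK phiA]]]; first by exists id; split=> //; exact: emb_id.
have [psi [psiK psiX psiA]] := brs_bi_interpretable_on (A i) BR rec (brs_pull BR' phiK).
exists (phi \o psi); split; first exact: emb_comp psiK phiK.
move=> j; rewrite in_cons -pull_comp => /predU1P [-> // | js].
exact: bi_interpretable_on_pull (phiA j js) psiK psiX.
Qed.

Lemma brs_bi_interpretable (E E' : lang) (X : structure E U) (X' : structure E' U) :
  big_ramsey_structure Kc K X -> recurrent K X -> big_ramsey_structure Kc K X' ->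
  exists eta, is_emb K K eta /\ bi_interpretable K X (pull X' eta).
Proof.
move=> BR rec BR'.
pose N := maxn (\max_(s : E) ar s) (\max_(s : E') ar s).
have [eta [etaK etaA]] := brs_bi_interpretable_on_family
  (fun c : {m : 'I_N.+1 & code L m} => decode (tagged c)) BR rec BR'.
exists eta; split=> //; apply: (bi_interpretable_of_small (N := N)) => // s.
- by apply: leq_trans (leq_maxl _ _); apply: leq_bigmax.
- by apply: leq_trans (leq_maxr _ _); apply: leq_bigmax.
Qed.

End FraisseLimit.

Theorem corollary2p7 (L : lang) (Kc : fclass L) (U : countType) (K : structure L U)
  (E E' : lang) (X : structure E U) (X' : structure E' U) :
  fraisse_class Kc -> is_flim Kc K -> finite_BRDs Kc K ->
  big_ramsey_structure Kc K X -> recurrent K X ->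
  big_ramsey_structure Kc K X' -> recurrent K X' ->
  (exists eta : U -> U, is_emb K K eta /\ bi_interpretable K X (pull X' eta)) /\
  (exists eta : U -> U, is_emb K K eta /\ bi_interpretable K X' (pull X eta)).
Proof.
move=> _ flim _ BR rec BR' rec'.
exact: (conj (brs_bi_interpretable flim BR rec BR') (brs_bi_interpretable flim BR' rec' BR)).
Qed.
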